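(* Let $a$ and $b$ be relatively prime integers with $1<a<b$, let $(u,v)$ be the definitely least solution of $ax+by=1$, and let $S=\langle a,b\rangle$. Then $\#T(S)=|uv|$.
   Context: $\langle a,b\rangle=\{\lambda_1a+\lambda_2b:\lambda_1,\lambda_2\in\mathbb{N}\}$ with $\mathbb{N}$ the nonnegative integers. $F(S)$ is the largest integer not in $S$; $N(S)=\{s\in S:s<F(S)\}$ and $T(S)=\{s\in N(S): s-1\notin S\text{ and }s+1\notin S\}$. The definitely least solution $(u,v)$ of $ax+by=1$ is the unique integer solution with both $|u|$ and $|v|$ minimal; equivalently the solution with $|u|\le b/2$, $|v|\le a/2$. *)

From mathcomp Require Import all_boot all_order all_algebra.
Set Implicit Arguments. Unset Strict Implicit. Unset Printing Implicit Defensive.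
Import Order.TTheory GRing.Theory Num.Theory.
Local Open Scope ring_scope.

(* Negative integers are never in S; for x = n >= 0 we search l1, l2 in
   [0, n], which is exhaustive whenever a, b >= 1 (as in the theorem). *)
Definition inS (a b : nat) (x : int) : bool :=
  match x with
  | Posz n => has (fun i => has (fun j => (i * a + j * b == n)%N) (iota 0 n.+1)) (iota 0 n.+1)
  | Negz _ => false
  end.

Definition is_frobenius (a b : nat) (F : int) : Prop :=
  ~~ inS a b F /\ (forall x : int, F < x -> inS a b x).

(* N(S) = { s in S : s < F(S) }, listed increasingly (S contains only
   nonnegative integers, so s ranges over 0 .. |F|-1). *)
Definition NS (a b : nat) (F : int) : seq int :=
  [seq s <- [seq i%:Z | i <- iota 0 `|F|%N] | (s < F) && inS a b s].

Definition TS (a b : nat) (F : int) : seq int :=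
  [seq s <- NS a b F | ~~ inS a b (s - 1) && ~~ inS a b (s + 1)].

Definition definitely_least (a b : nat) (u v : int) : Prop :=
  a%:Z * u + b%:Z * v = 1 /\
  (forall x y : int, a%:Z * x + b%:Z * y = 1 -> `|u| <= `|x| /\ `|v| <= `|y|).

From mathcomp Require Import all_boot all_order all_algebra.
From mathcomp Require Import zify ring.
Import Order.TTheory GRing.Theory Num.Theory.
Local Open Scope ring_scope.

(* Every integer is uniquely X a + Y b with 0 <= Y < a, and it lies in S
   exactly when X >= 0.  If a u + b v = 1 with u > 0 > v, adding or
   subtracting 1 shifts (X, Y) by (u, v), renormalised by (b, -a) when Y
   leaves [0, a); the bounds 2u <= b and -2v <= a, which express the
   minimality of (u, v), then show that X a + Y b is isolated in S exactly
   when 0 <= X < u and 0 <= Y < -v.  Isolated elements lie below the Frobenius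
   number, so T(S) has u (-v) elements; the case u < 0 < v follows by
   exchanging a and b. *)

Definition isolated (a b : nat) (s : int) : bool :=
  [&& inS a b s, ~~ inS a b (s - 1) & ~~ inS a b (s + 1)].

Lemma inSP (a b n : nat) : (0 < a)%N -> (0 < b)%N ->
  reflect (exists i j, (i * a + j * b)%N = n) (inS a b n).
Proof.
move=> a_gt0 b_gt0.
apply: (iffP hasP) => [[i _ /hasP[j _ /eqP ij_n]]|[i [j ij_n]]].
  by exists i, j.
exists i; first by rewrite mem_iota; nia.
by apply/hasP; exists j; rewrite ?mem_iota ?ij_n //; nia.
Qed.

Section TwoGenerators.

Variables a b : nat.
Hypotheses (a_gt0 : (0 < a)%N) (b_gt0 : (0 < b)%N).

Lemma inSC (z : int) : inS a b z = inS b a z.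
Proof.
case: z => [n|//]; apply/inSP/inSP => // -[i [j ij_n]]; exists j, i; lia.
Qed.

Lemma TSC (F : int) : TS a b F = TS b a F.
Proof. by rewrite /TS /NS -!filter_predI; apply: eq_filter => s /=; rewrite !inSC. Qed.

Lemma mem_TS (F s : int) : (forall x, F < x -> inS a b x) ->
  (s \in TS a b F) = isolated a b s.
Proof.
move=> F_max; rewrite !mem_filter /isolated; apply/idP/idP.
  by case/and3P=> /andP[-> ->] /andP[_ ->].
case/and3P=> s_in s1_out s2_out.
have s_ge0 : 0 <= s by case: s s_in {s1_out s2_out}.
have s_ltF : s < F by rewrite ltNge; apply: contraNN s2_out => F_le; apply: F_max; lia.
rewrite s1_out s2_out s_ltF s_in /=; apply/mapP; exists `|s|%N; last by lia.
by rewrite mem_iota; lia.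
Qed.

Variables u v : int.
Hypothesis bezout : a%:Z * u + b%:Z * v = 1.

Lemma lincomb_rem_uniq {X Y X' Y' : int} : 0 <= Y < a%:Z -> 0 <= Y' < a%:Z ->
  X * a%:Z + Y * b%:Z = X' * a%:Z + Y' * b%:Z -> X = X' /\ Y = Y'.
Proof.
move=> Y_rem Y'_rem eq_XY.
have eq_Yb : (Y - Y') * b%:Z = (X' - X) * a%:Z by lia.
have dvd_Y : Y - Y' = a%:Z * (u * (Y - Y') + v * (X' - X)).
  rewrite -[LHS]mulr1 -bezout.
  transitivity (a%:Z * u * (Y - Y') + v * ((Y - Y') * b%:Z)); first by ring.
  by rewrite eq_Yb; ring.
have quot0 : u * (Y - Y') + v * (X' - X) = 0 by nia.
have eq_Y : Y = Y' by move: dvd_Y; rewrite quot0 mulr0; lia.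
by split => //; subst Y'; nia.
Qed.

Lemma lincomb_rem_exists (z : int) :
  exists X Y : int, 0 <= Y < a%:Z /\ z = X * a%:Z + Y * b%:Z.
Proof.
exists (z * u + (z * v %/ a)%Z * b%:Z), (z * v %% a)%Z; split.
  by rewrite modz_ge0 ?ltz_pmod //; lia.
rewrite -[LHS]mulr1 -bezout.
transitivity (z * u * a%:Z + ((z * v %/ a)%Z * a%:Z + (z * v %% a)%Z) * b%:Z).
  by rewrite -divz_eq; ring.
by ring.
Qed.

Lemma inS_lincomb (X Y : int) : 0 <= Y < a%:Z ->
  inS a b (X * a%:Z + Y * b%:Z) = (0 <= X).
Proof.
move=> Y_rem; apply/idP/idP => [|X_ge0].
  case eq_n: (X * a%:Z + Y * b%:Z) => [n|//] /(inSP _ _ _ a_gt0 b_gt0)[i [j ij_n]].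
  have := divn_eq j a; set q := (j %/ a)%N; set r := (j %% a)%N => eq_j.
  have r_rem : 0 <= r%:Z < a%:Z by rewrite ltz_nat ltn_mod.
  have eq_XY : X * a%:Z + Y * b%:Z = (i + q * b)%N%:Z * a%:Z + r%:Z * b%:Z.
    by rewrite eq_n -ij_n eq_j !PoszD !PoszM; ring.
  by have [-> _] := lincomb_rem_uniq Y_rem r_rem eq_XY.
have [x ->] : exists x : nat, X = x by exists `|X|%N; lia.
have [y ->] : exists y : nat, Y = y by exists `|Y|%N; lia.
by rewrite -!PoszM -PoszD; apply/inSP => //; exists x, y.
Qed.

Hypotheses (u_gt0 : 0 < u) (v_lt0 : v < 0).
Hypotheses (u_le : 2 * u <= b%:Z) (v_le : - 2 * v <= a%:Z).

Lemma isolated_lincomb (X Y : int) : 0 <= Y < a%:Z ->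
  isolated a b (X * a%:Z + Y * b%:Z) = (0 <= X < u) && (Y < - v).
Proof.
move=> Y_rem; rewrite /isolated inS_lincomb //.
have [Y_lt|Y_ge] := ltrP Y (- v).
  have -> : X * a%:Z + Y * b%:Z - 1 = (X - u) * a%:Z + (Y - v) * b%:Z.
    by rewrite -bezout; ring.
  have -> : X * a%:Z + Y * b%:Z + 1 = (X + u - b%:Z) * a%:Z + (Y + v + a%:Z) * b%:Z.
    by rewrite -bezout; ring.
  rewrite !inS_lincomb; lia.
have -> : X * a%:Z + Y * b%:Z + 1 = (X + u) * a%:Z + (Y + v) * b%:Z.
  by rewrite -bezout; ring.
rewrite inS_lincomb; lia.
Qed.

Lemma size_TS (F : int) : (forall x, F < x -> inS a b x) ->
  size (TS a b F) = (`|u| * `|v|)%N.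
Proof.
move=> F_max.
set L := [seq x%:Z * a%:Z + y%:Z * b%:Z | x <- iota 0 `|u|, y <- iota 0 `|v|].
have <- : size L = (`|u| * `|v|)%N by rewrite size_allpairs !size_iota.
apply/perm_size/uniq_perm.
- by rewrite !filter_uniq // map_inj_uniq ?iota_uniq // => m n [].
- rewrite allpairs_uniq ?iota_uniq // => -[x y] [x' y'].
  move=> /allpairsP[[x1 y1] [_ /[!mem_iota]/= y1_lt [-> ->]]].
  move=> /allpairsP[[x2 y2] [_ /[!mem_iota]/= y2_lt [-> ->]]] /= eq_xy.
  have y1_rem : 0 <= y1%:Z < a%:Z by lia.
  have y2_rem : 0 <= y2%:Z < a%:Z by lia.
  by have [[->] [->]] := lincomb_rem_uniq y1_rem y2_rem eq_xy.
move=> s; rewrite mem_TS //; apply/idP/allpairsP => [|[[x y] [/= + + ->]]].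
  have [X [Y [Y_rem ->]]] := lincomb_rem_exists s.
  rewrite isolated_lincomb // => /andP[/andP[X_ge0 X_lt] Y_lt].
  by exists (`|X|%N, `|Y|%N); rewrite !mem_iota /=; split; lia.
by rewrite !mem_iota => x_lt y_lt; rewrite isolated_lincomb; lia.
Qed.

End TwoGenerators.

Lemma definitely_least_le {a b : nat} {u v : int} : (0 < a)%N -> (0 < b)%N ->
  definitely_least a b u v ->
  2 * `|u| <= b%:Z /\ 2 * `|v| <= a%:Z.
Proof.
move=> a_gt0 b_gt0 [bezout uv_min].
have [] := uv_min (u - b%:Z) (v + a%:Z) ltac:(by rewrite -bezout; ring).
have [] := uv_min (u + b%:Z) (v - a%:Z) ltac:(by rewrite -bezout; ring).
lia.
Qed.

Lemma bezout_signs (a b : nat) (u v : int) : (1 < a)%N -> (1 < b)%N ->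
  a%:Z * u + b%:Z * v = 1 -> (0 < u) && (v < 0) || (u < 0) && (0 < v).
Proof.
move=> a_gt1 b_gt1 bezout.
by case: (ltrgtP u 0) => u_sgn; case: (ltrgtP v 0) => v_sgn; nia.
Qed.

Theorem lemma3p3 (a b : nat) (u v : int) (F : int) :
  coprime a b -> (1 < a)%N -> (a < b)%N ->
  definitely_least a b u v ->
  is_frobenius a b F ->
  size (TS a b F) = absz (u * v).
Proof.
move=> _ a_gt1 lt_ab uv_least [_ F_max].
have a_gt0 : (0 < a)%N by lia.
have b_gt0 : (0 < b)%N by lia.
have [u_le v_le] := definitely_least_le a_gt0 b_gt0 uv_least.
have bezout := proj1 uv_least.
have uv_signs : (0 < u) && (v < 0) || (u < 0) && (0 < v).
  by apply: bezout_signs bezout; lia.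
rewrite abszM; case/orP: uv_signs => /andP[u_sgn v_sgn].
  by apply: size_TS => //; lia.
have F_max' : forall x, F < x -> inS b a x by move=> x /F_max; rewrite inSC.
by rewrite TSC // mulnC; apply: size_TS => //; lia.
Qed.
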